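(* Let $(X,d)$ be a geodesic metric space, $p\in X$, $\epsilon>0$ and $M>0$. Then there exists $C=C(\epsilon,M)\ge1$ such that for every pair of points $x,y\in X$ with $d(x,y)\le M$ and every $d$-geodesic $[x,y]$ from $x$ to $y$, $$l_{d_\epsilon}([x,y])\le C\,d_\epsilon(x,y).$$
   Context: Uniformized metric: $d_\epsilon(x,y)=\inf_\gamma\int_\gamma e^{-\epsilon d(p,z)}\,ds(z)$, infimum over $d$-rectifiable curves from $x$ to $y$ (integral with respect to $d$-arclength); $l_{d_\epsilon}(\gamma)$ denotes the length of $\gamma$ with respect to $d_\epsilon$. *)

From Stdlib Require Import Reals.
From Coquelicot Require Import Coquelicot.
Open Scope R_scope.

Definition is_metric {X : Type} (d : X -> X -> R) : Prop :=
  (forall x y, 0 <= d x y) /\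
  (forall x y, d x y = 0 <-> x = y) /\
  (forall x y, d x y = d y x) /\
  (forall x y z, d x z <= d x y + d y z).

Fixpoint sumR (n : nat) (f : nat -> R) : R :=
  match n with
  | O => 0
  | S k => sumR k f + f k
  end.

Definition is_partition (a b : R) (n : nat) (t : nat -> R) : Prop :=
  t O = a /\ t n = b /\ (forall i, (i < n)%nat -> t i <= t (S i)).

Definition curve_length {X : Type} (dist : X -> X -> R) (gamma : R -> X) (a b : R) : Rbar :=
  Lub_Rbar (fun s => exists (n : nat) (t : nat -> R), is_partition a b n t /\
     s = sumR n (fun i => dist (gamma (t i)) (gamma (t (S i))))).

Definition is_curve {X : Type} (d : X -> X -> R) (gamma : R -> X) (a b : R) : Prop :=
  a <= b /\
  forall s, a <= s <= b -> forall e, 0 < e -> exists delta, 0 < delta /\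
    forall s', a <= s' <= b -> Rabs (s' - s) < delta -> d (gamma s) (gamma s') < e.

Definition rectifiable {X : Type} (d : X -> X -> R) (gamma : R -> X) (a b : R) : Prop :=
  is_curve d gamma a b /\ is_finite (curve_length d gamma a b).

(* Line integral  \int_gamma rho ds  (w.r.t. d-arclength), for a rectifiable curve and
   a continuous bounded rho >= 0: supremum of lower sums
   sum_i (inf_{[t_i,t_{i+1}]} rho o gamma) * l_d(gamma|[t_i,t_{i+1}]). *)
Definition line_integral {X : Type} (d : X -> X -> R) (rho : X -> R)
    (gamma : R -> X) (a b : R) : Rbar :=
  Lub_Rbar (fun v => exists (n : nat) (t : nat -> R), is_partition a b n t /\
     v = sumR n (fun i =>
           real (Glb_Rbar (fun r => exists s, t i <= s <= t (S i) /\ r = rho (gamma s)))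
           * real (curve_length d gamma (t i) (t (S i))))).

Definition uniformized {X : Type} (d : X -> X -> R) (p : X) (eps : R) (x y : X) : R :=
  real (Glb_Rbar (fun v => exists (gamma : R -> X) (a b : R),
     rectifiable d gamma a b /\ gamma a = x /\ gamma b = y /\
     Finite v = line_integral d (fun z => exp (- eps * d p z)) gamma a b)).

Definition is_geodesic {X : Type} (d : X -> X -> R) (gamma : R -> X) (x y : X) : Prop :=
  gamma 0 = x /\ gamma (d x y) = y /\
  forall s t, 0 <= s <= d x y -> 0 <= t <= d x y -> d (gamma s) (gamma t) = Rabs (s - t).

Definition geodesic_space {X : Type} (d : X -> X -> R) : Prop :=
  is_metric d /\ forall x y : X, exists gamma, is_geodesic d gamma x y.

(* Write D = d(x,y) and rho = exp(-eps d(p,.)). Along a geodesic [x,y] we have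
   d(p,z) >= d(p,x) - D, so rho <= exp(-eps (d(p,x) - D)) and the uniformized
   length of [x,y] is at most exp(-eps (d(p,x) - D)) D. Conversely, any curve from
   x to y stays in the closed ball B(x,D) until it first reaches distance D from x;
   that initial arc has length >= D and rho >= exp(-eps (d(p,x) + D)) on it, so
   d_eps(x,y) >= exp(-eps (d(p,x) + D)) D. The ratio of the two bounds is
   exp(2 eps D) <= exp(2 eps M). *)

From Stdlib Require Import Reals Lra Lia Classical.
From Coquelicot Require Import Coquelicot.
Open Scope R_scope.

Lemma exp_le_exp x y : x <= y -> exp x <= exp y.
Proof.
  intros [Hlt | ->]; [left; apply exp_increasing, Hlt | apply Rle_refl].
Qed.

Lemma real_ge0 (x : Rbar) : Rbar_le (Finite 0) x -> 0 <= real x.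
Proof. destruct x; simpl; tauto || lra. Qed.

Lemma real_ge_of_le_finite (r : R) (x y : Rbar) :
  Rbar_le (Finite r) x -> Rbar_le x y -> is_finite y -> r <= real x.
Proof.
  unfold is_finite; destruct x, y; simpl; intros; try discriminate; tauto || lra.
Qed.

Section Bounds.
Variable E : R -> Prop.

Lemma Lub_Rbar_ub s : E s -> Rbar_le (Finite s) (Lub_Rbar E).
Proof. intros Hs. apply (proj1 (Lub_Rbar_correct E)), Hs. Qed.

Lemma Lub_Rbar_le (B : R) :
  (forall s, E s -> s <= B) -> Rbar_le (Lub_Rbar E) (Finite B).
Proof. intros HB. apply (proj2 (Lub_Rbar_correct E)). intros s Hs. exact (HB s Hs). Qed.

Lemma Glb_Rbar_lb s : E s -> Rbar_le (Glb_Rbar E) (Finite s).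
Proof. intros Hs. apply (proj1 (Glb_Rbar_correct E)), Hs. Qed.

Lemma Glb_Rbar_ge (B : R) :
  (forall s, E s -> B <= s) -> Rbar_le (Finite B) (Glb_Rbar E).
Proof. intros HB. apply (proj2 (Glb_Rbar_correct E)). intros s Hs. exact (HB s Hs). Qed.

Lemma Lub_Rbar_finite_le s (B : R) : E s -> (forall s, E s -> s <= B) ->
  exists v, Lub_Rbar E = Finite v /\ v <= B.
Proof.
  intros Hs HB. pose proof (Lub_Rbar_ub s Hs). pose proof (Lub_Rbar_le B HB).
  destruct (Lub_Rbar E) as [v | |]; simpl in *; try tauto. exists v; auto.
Qed.

Lemma real_Glb_Rbar_between s (B : R) : E s -> (forall s, E s -> B <= s) ->
  B <= real (Glb_Rbar E) <= s.
Proof.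
  intros Hs HB. pose proof (Glb_Rbar_lb s Hs). pose proof (Glb_Rbar_ge B HB).
  destruct (Glb_Rbar E); simpl in *; tauto.
Qed.

End Bounds.

Lemma sumR_le n f g : (forall i, (i < n)%nat -> f i <= g i) -> sumR n f <= sumR n g.
Proof.
  induction n as [|n IH]; simpl; intros H; [lra|].
  pose proof (H n ltac:(lia)). assert (sumR n f <= sumR n g) by (apply IH; auto).
  lra.
Qed.

Lemma sumR_ext n f g : (forall i, (i < n)%nat -> f i = g i) -> sumR n f = sumR n g.
Proof.
  intros H. apply Rle_antisym; apply sumR_le; intros i Hi; rewrite (H i Hi); lra.
Qed.

Lemma sumR_telescope n (t : nat -> R) : sumR n (fun i => t (S i) - t i) = t n - t O.
Proof. induction n as [|n IH]; simpl; [|rewrite IH]; lra. Qed.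

Lemma partition_mono a b n t : is_partition a b n t ->
  forall i j, (i <= j <= n)%nat -> t i <= t j.
Proof.
  intros [_ [_ Hmono]] i j Hij. induction j as [|j IH].
  - replace i with O by lia. lra.
  - destruct (Nat.eq_dec i (S j)) as [-> | Hne]; [lra|].
    pose proof (Hmono j ltac:(lia)). assert (t i <= t j) by (apply IH; lia). lra.
Qed.

Lemma partition_bounds a b n t : is_partition a b n t ->
  forall i, (i <= n)%nat -> a <= t i <= b.
Proof.
  intros Hp i Hi. pose proof Hp as [H0 [Hn _]]. rewrite <- H0, <- Hn.
  split; apply (partition_mono a b n t Hp); lia.
Qed.

Lemma partition_sumR_le a b n t f (K : R) : is_partition a b n t ->
  (forall i, (i < n)%nat -> f i <= K * (t (S i) - t i)) -> sumR n f <= K * (b - a).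
Proof.
  intros [H0 [Hn _]] Hf. rewrite <- H0, <- Hn.
  replace (K * (t n - t O)) with (sumR n (fun i => K * t (S i) - K * t i))
    by (rewrite (sumR_telescope n (fun i => K * t i)); ring).
  apply sumR_le. intros i Hi. rewrite <- Rmult_minus_distr_l. apply Hf, Hi.
Qed.

Definition trivial_partition (a b : R) (i : nat) : R := match i with O => a | _ => b end.

Lemma trivial_partitionP a b : a <= b -> is_partition a b 1 (trivial_partition a b).
Proof. intros Hab. repeat split. intros i Hi. replace i with O by lia. exact Hab. Qed.

Section CurveLength.
Context {X : Type}.
Variables (dist : X -> X -> R) (g : R -> X).

Lemma curve_length_ge_dist a b : a <= b ->
  Rbar_le (Finite (dist (g a) (g b))) (curve_length dist g a b).
Proof.
  intros Hab. apply Lub_Rbar_ub. exists 1%nat, (trivial_partition a b).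
  split; [apply trivial_partitionP, Hab | simpl; ring].
Qed.

Lemma curve_length_le_lipschitz a b (K : R) :
  (forall s t, a <= s <= t -> t <= b -> dist (g s) (g t) <= K * (t - s)) ->
  Rbar_le (curve_length dist g a b) (Finite (K * (b - a))).
Proof.
  intros Hlip. apply Lub_Rbar_le. intros w [n [t [Hp ->]]].
  apply (partition_sumR_le a b n t _ K Hp). intros i Hi.
  pose proof (partition_bounds a b n t Hp i ltac:(lia)).
  pose proof (partition_bounds a b n t Hp (S i) ltac:(lia)).
  pose proof (partition_mono a b n t Hp i (S i) ltac:(lia)).
  apply Hlip; lra.
Qed.

Hypothesis dist_ge0 : forall u v, 0 <= dist u v.

Lemma curve_length_ge0 a b : a <= b -> 0 <= real (curve_length dist g a b).
Proof.
  intros Hab. apply real_ge0. eapply Rbar_le_trans; [|apply curve_length_ge_dist, Hab].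
  apply dist_ge0.
Qed.

Lemma curve_length_mono a s b : a <= s <= b ->
  Rbar_le (curve_length dist g a s) (curve_length dist g a b).
Proof.
  intros Hs. apply (proj2 (Lub_Rbar_correct _)). intros w [n [t [Hp ->]]].
  pose proof Hp as [H0 [Hn Hmono]].
  set (t' := fun i => if Nat.leb i n then t i else b).
  assert (Ht' : forall i, (i <= n)%nat -> t' i = t i).
  { intros i Hi. unfold t'. now rewrite (proj2 (Nat.leb_le i n) Hi). }
  assert (Hp' : is_partition a b (S n) t').
  { split; [rewrite Ht' by lia; exact H0|split].
    - unfold t'. now rewrite (proj2 (Nat.leb_gt (S n) n) ltac:(lia)).
    - intros i Hi. destruct (Nat.eq_dec i n) as [-> | Hne].
      + rewrite Ht', Hn by lia. unfold t'. rewrite (proj2 (Nat.leb_gt (S n) n) ltac:(lia)). lra.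
      + rewrite !Ht' by lia. apply Hmono. lia. }
  eapply Rbar_le_trans; [|apply Lub_Rbar_ub; exists (S n), t'; split; [exact Hp'|reflexivity]].
  simpl. pose proof (dist_ge0 (g (t' n)) (g (t' (S n)))).
  enough (sumR n (fun i => dist (g (t i)) (g (t (S i))))
          = sumR n (fun i => dist (g (t' i)) (g (t' (S i))))) by lra.
  apply sumR_ext. intros i Hi. rewrite !Ht' by lia. reflexivity.
Qed.

End CurveLength.

Definition lower_sum {X : Type} (d : X -> X -> R) (rho : X -> R) (g : R -> X)
    (n : nat) (t : nat -> R) : R :=
  sumR n (fun i =>
    real (Glb_Rbar (fun r => exists s, t i <= s <= t (S i) /\ r = rho (g s)))
    * real (curve_length d g (t i) (t (S i)))).

Section LineIntegral.
Context {X : Type}.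
Variables (d : X -> X -> R) (rho : X -> R) (g : R -> X).

Lemma lower_sum_le_line_integral a b n t v : is_partition a b n t ->
  Finite v = line_integral d rho g a b -> lower_sum d rho g n t <= v.
Proof.
  intros Hp Hv. change (Rbar_le (Finite (lower_sum d rho g n t)) (Finite v)).
  rewrite Hv. apply Lub_Rbar_ub. exists n, t. split; [exact Hp | reflexivity].
Qed.

Hypotheses (d_ge0 : forall u v, 0 <= d u v) (rho_ge0 : forall z, 0 <= rho z).

Lemma inf_rho_ge0 s t :
  0 <= real (Glb_Rbar (fun r => exists u, s <= u <= t /\ r = rho (g u))).
Proof. apply real_ge0, Glb_Rbar_ge. intros r [u [_ ->]]. apply rho_ge0. Qed.

Lemma line_integral_ge0 a b v : a <= b ->
  Finite v = line_integral d rho g a b -> 0 <= v.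
Proof.
  intros Hab Hv.
  eapply Rle_trans; [|apply (lower_sum_le_line_integral a b 1 _ v (trivial_partitionP a b Hab) Hv)].
  unfold lower_sum; simpl. rewrite Rplus_0_l.
  apply Rmult_le_pos; [apply inf_rho_ge0 | apply curve_length_ge0; auto].
Qed.

End LineIntegral.

Definition continuous_on (f : R -> R) (a b : R) : Prop :=
  forall s, a <= s <= b -> forall e, 0 < e -> exists delta, 0 < delta /\
    forall s', a <= s' <= b -> Rabs (s' - s) < delta -> Rabs (f s' - f s) < e.

Lemma continuous_on_dist_curve {X : Type} (d : X -> X -> R) g a b :
  is_metric d -> is_curve d g a b -> continuous_on (fun u => d (g a) (g u)) a b.
Proof.
  intros [_ [_ [Hsym Htri]]] [_ Hcont] s Hs e He.
  destruct (Hcont s Hs e He) as [delta [Hdelta Hclose]]. exists delta. split; [exact Hdelta|].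
  intros s' Hs' Hss'. pose proof (Hclose s' Hs' Hss').
  pose proof (Htri (g a) (g s) (g s')). pose proof (Htri (g a) (g s') (g s)).
  rewrite (Hsym (g s') (g s)) in *. apply Rabs_def1; lra.
Qed.

Lemma first_hitting_time f a b c : a <= b -> continuous_on f a b -> f a < c <= f b ->
  exists s, a <= s <= b /\ f s = c /\ forall u, a <= u <= s -> f u <= c.
Proof.
  intros Hab Hf [Hfa Hfb].
  set (E := fun s => a <= s <= b /\ forall u, a <= u <= s -> f u < c).
  assert (Ea : E a).
  { split; [lra|]. intros u Hu. replace u with a by lra. exact Hfa. }
  destruct (completeness E (ex_intro _ b (fun s Hs => proj2 (proj1 Hs))) (ex_intro _ a Ea))
    as [m [Hub Hleast]].
  assert (Ham : a <= m) by (apply Hub, Ea).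
  assert (Hmb : m <= b) by (apply Hleast; intros s [Hs _]; lra).
  assert (below : forall u, a <= u < m -> f u < c).
  { intros u Hu. destruct (classic (exists s, E s /\ u < s)) as [[s [[_ Hs] Hus]] | Hnone].
    - apply Hs. lra.
    - enough (m <= u) by lra. apply Hleast. intros s Hs.
      apply Rnot_lt_le. intros Hus. apply Hnone. eauto. }
  assert (Hfm_le : f m <= c).
  { apply Rnot_lt_le. intros Hgt.
    destruct (Req_dec m a) as [-> | Hma]; [lra|].
    destruct (Hf m ltac:(lra) (f m - c) ltac:(lra)) as [delta [Hdelta Hclose]].
    set (u := Rmax a (m - delta / 2)).
    assert (a <= u /\ m - delta / 2 <= u) as [Hu1 Hu2] by (split; [apply Rmax_l | apply Rmax_r]).
    assert (Hum : u < m) by (apply Rmax_lub_lt; lra).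
    pose proof (Rabs_def2 _ _ (Hclose u ltac:(lra) ltac:(apply Rabs_def1; lra))).
    pose proof (below u ltac:(lra)). lra. }
  assert (Hfm_ge : c <= f m).
  { apply Rnot_lt_le. intros Hlt.
    destruct (Req_dec m b) as [-> | Hmb']; [lra|].
    destruct (Hf m ltac:(lra) (c - f m) ltac:(lra)) as [delta [Hdelta Hclose]].
    set (s := Rmin b (m + delta / 2)).
    assert (s <= b /\ s <= m + delta / 2) as [Hs1 Hs2] by (split; [apply Rmin_l | apply Rmin_r]).
    assert (Hms : m < s) by (apply Rmin_glb_lt; lra).
    enough (Es : E s) by (pose proof (Hub s Es); lra).
    split; [lra|]. intros u Hu. destruct (Rlt_or_le u m) as [Hum | Hmu]; [apply below; lra|].
    pose proof (Rabs_def2 _ _ (Hclose u ltac:(lra) ltac:(apply Rabs_def1; lra))). lra. }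
  exists m. repeat split; try lra. intros u Hu.
  destruct (Rlt_or_le u m); [left; apply below; lra | replace u with m by lra; exact Hfm_le].
Qed.

Definition partition_at (a s b : R) (i : nat) : R :=
  match i with O => a | 1%nat => s | _ => b end.

Lemma partition_atP a s b : a <= s <= b -> is_partition a b 2 (partition_at a s b).
Proof. intros Hs. repeat split. intros [|[|i]] Hi; simpl; lra || lia. Qed.

Lemma line_integral_ge_mul_dist {X : Type} (d : X -> X -> R) rho g a b (m v : R) :
  is_metric d -> rectifiable d g a b -> (forall z, 0 <= rho z) -> 0 <= m ->
  (forall z, d (g a) z <= d (g a) (g b) -> m <= rho z) ->
  Finite v = line_integral d rho g a b -> m * d (g a) (g b) <= v.
Proof.
  intros Hd [Hc Hfin] Hrho Hm Hball Hv. pose proof Hd as [Hpos [Heq _]].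
  pose proof (proj1 Hc) as Hab. pose proof (Hpos (g a) (g b)) as HD.
  set (D := d (g a) (g b)) in *.
  destruct (Req_dec D 0) as [HD0 | HD0].
  { rewrite HD0, Rmult_0_r. exact (line_integral_ge0 d rho g Hpos Hrho a b v Hab Hv). }
  assert (Hfa : d (g a) (g a) < D) by (rewrite (proj2 (Heq _ _) eq_refl); lra).
  destruct (first_hitting_time (fun u => d (g a) (g u)) a b D Hab
              (continuous_on_dist_curve d g a b Hd Hc) (conj Hfa (Rle_refl D)))
    as [s [Hs [Hds Hbefore]]].
  pose proof (lower_sum_le_line_integral d rho g a b 2 _ v (partition_atP a s b Hs) Hv) as Hsum.
  unfold lower_sum in Hsum; simpl in Hsum.
  assert (Hinf : m <= real (Glb_Rbar (fun r => exists u, a <= u <= s /\ r = rho (g u)))).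
  { apply (real_Glb_Rbar_between _ (rho (g a))); [exists a; split; [lra | reflexivity]|].
    intros r [u [Hu ->]]. apply Hball, Hbefore, Hu. }
  assert (Hlen : D <= real (curve_length d g a s)).
  { apply (real_ge_of_le_finite D _ (curve_length d g a b)); [|apply curve_length_mono; auto|exact Hfin].
    rewrite <- Hds. apply curve_length_ge_dist. lra. }
  pose proof (Rmult_le_pos _ _ (inf_rho_ge0 rho g Hrho s b)
                (curve_length_ge0 d g Hpos s b ltac:(lra))) as Hrest.
  assert (m * D <= real (Glb_Rbar (fun r => exists u, a <= u <= s /\ r = rho (g u)))
                   * real (curve_length d g a s)) by (apply Rmult_le_compat; lra).
  lra.
Qed.

Section Geodesic.
Context {X : Type}.
Variables (d : X -> X -> R) (gam : R -> X) (x y : X).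
Hypothesis geo : is_geodesic d gam x y.

Lemma geodesic_dist s t : 0 <= s <= t -> t <= d x y -> d (gam s) (gam t) = t - s.
Proof.
  intros Hs Ht. destruct geo as [_ [_ Hiso]].
  rewrite Hiso, Rabs_left1 by lra. ring.
Qed.

Lemma geodesic_dist_start u : 0 <= u <= d x y -> d x (gam u) = u.
Proof.
  intros Hu. destruct geo as [H0 _]. rewrite <- H0 at 1. rewrite geodesic_dist by lra. ring.
Qed.

Lemma geodesic_curve_length s t : 0 <= s <= t -> t <= d x y ->
  curve_length d gam s t = Finite (t - s).
Proof.
  intros Hs Ht. apply Rbar_le_antisym.
  - replace (t - s) with (1 * (t - s)) by ring. apply curve_length_le_lipschitz.
    intros u v Hu Hv. rewrite geodesic_dist by lra. lra.
  - rewrite <- geodesic_dist by lra. apply curve_length_ge_dist. lra.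
Qed.

Lemma geodesic_rectifiable s t : 0 <= s <= t -> t <= d x y -> rectifiable d gam s t.
Proof.
  intros Hs Ht. split; [split; [lra|] | rewrite geodesic_curve_length by lra; reflexivity].
  intros u Hu e He. exists e. split; [exact He|]. intros u' Hu' Hclose.
  destruct geo as [_ [_ Hiso]]. rewrite Hiso, Rabs_minus_sym by lra. exact Hclose.
Qed.

Lemma line_integral_geodesic_le rho (K : R) s t : (forall z, 0 <= rho z) ->
  0 <= s <= t -> t <= d x y -> (forall u, s <= u <= t -> rho (gam u) <= K) ->
  exists v, Finite v = line_integral d rho gam s t /\ v <= K * (t - s).
Proof.
  intros Hrho Hs Ht HK.
  destruct (Lub_Rbar_finite_le (fun w => exists n tt, is_partition s t n tt /\ w = lower_sum d rho gam n tt)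
              (lower_sum d rho gam 1 (trivial_partition s t)) (K * (t - s))) as [v [Hv HvK]].
  - exists 1%nat, (trivial_partition s t). split; [apply trivial_partitionP; lra | reflexivity].
  - intros w [n [tt [Hp ->]]]. apply (partition_sumR_le s t n tt _ K Hp). intros i Hi.
    pose proof (partition_bounds s t n tt Hp i ltac:(lia)).
    pose proof (partition_bounds s t n tt Hp (S i) ltac:(lia)).
    pose proof (partition_mono s t n tt Hp i (S i) ltac:(lia)).
    rewrite geodesic_curve_length by lra. apply Rmult_le_compat_r; [lra|].
    apply Rle_trans with (rho (gam (tt i))); [|apply HK; lra].
    apply (real_Glb_Rbar_between _ (rho (gam (tt i))) 0).
    + exists (tt i). split; [lra | reflexivity].
    + intros r [u [_ ->]]. apply Hrho.
  - exists v. split; [symmetry; exact Hv | exact HvK].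
Qed.

End Geodesic.

Lemma exp_opp_mul_le (eps u v : R) : 0 <= eps -> u <= v -> exp (- eps * v) <= exp (- eps * u).
Proof. intros Heps Huv. apply exp_le_exp. nra. Qed.

Section Uniformized.
Context {X : Type}.
Variables (d : X -> X -> R) (p : X) (eps : R).
Hypotheses (metric : is_metric d) (eps_ge0 : 0 <= eps).

Lemma density_ge0 z : 0 <= exp (- eps * d p z).
Proof. left. apply exp_pos. Qed.

Lemma uniformized_le_line_integral g a b v : rectifiable d g a b ->
  Finite v = line_integral d (fun z => exp (- eps * d p z)) g a b ->
  uniformized d p eps (g a) (g b) <= v.
Proof.
  intros Hg Hv. apply (real_Glb_Rbar_between _ v 0).
  - exists g, a, b. auto.
  - intros w [g' [a' [b' [[[Hab' _] _] [_ [_ Hw]]]]]].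
    exact (line_integral_ge0 d _ g' (proj1 metric) density_ge0 a' b' w Hab' Hw).
Qed.

Variables (gam : R -> X) (x y : X).
Hypothesis geo : is_geodesic d gam x y.

Lemma density_geodesic_le u : 0 <= u <= d x y ->
  exp (- eps * d p (gam u)) <= exp (- eps * (d p x - d x y)).
Proof.
  intros Hu. apply exp_opp_mul_le; [exact eps_ge0|].
  destruct metric as [_ [_ [Hsym Htri]]].
  pose proof (Htri p (gam u) x) as Htri_u.
  rewrite (Hsym (gam u) x), (geodesic_dist_start d gam x y geo u Hu) in Htri_u. lra.
Qed.

Lemma uniformized_geodesic_le s t : 0 <= s <= t -> t <= d x y ->
  uniformized d p eps (gam s) (gam t) <= exp (- eps * (d p x - d x y)) * (t - s).
Proof.
  intros Hs Ht.
  destruct (line_integral_geodesic_le d gam x y geo _ (exp (- eps * (d p x - d x y))) s t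
              density_ge0 Hs Ht (fun u Hu => density_geodesic_le u ltac:(lra)))
    as [v [Hv HvK]].
  eapply Rle_trans; [|exact HvK].
  apply uniformized_le_line_integral; [apply (geodesic_rectifiable d gam x y geo); lra | exact Hv].
Qed.

Lemma curve_length_uniformized_geodesic_le :
  Rbar_le (curve_length (uniformized d p eps) gam 0 (d x y))
          (Finite (exp (- eps * (d p x - d x y)) * d x y)).
Proof.
  pose proof (curve_length_le_lipschitz (uniformized d p eps) gam 0 (d x y) _
                (fun s t Hs Ht => uniformized_geodesic_le s t Hs Ht)) as Hlen.
  rewrite Rminus_0_r in Hlen. exact Hlen.
Qed.

(* The geodesic supplies an admissible curve; without one, [uniformized] would be
   [real p_infty] = 0. *)
Lemma uniformized_ge : exp (- eps * (d p x + d x y)) * d x y <= uniformized d p eps x y.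
Proof.
  pose proof (proj1 metric) as Hpos. pose proof geo as [H0 [HD _]].
  destruct (line_integral_geodesic_le d gam x y geo _ (exp (- eps * (d p x - d x y))) 0 (d x y)
              density_ge0 ltac:(split; [lra | apply Hpos]) (Rle_refl _)
              (fun u Hu => density_geodesic_le u Hu)) as [v0 [Hv0 _]].
  apply (real_Glb_Rbar_between _ v0).
  - exists gam, 0, (d x y). split; [|auto].
    apply (geodesic_rectifiable d gam x y geo); [split; [lra | apply Hpos] | lra].
  - intros w [g [a [b [Hg [<- [<- Hw]]]]]].
    apply (line_integral_ge_mul_dist d _ g a b _ w metric Hg density_ge0); [left; apply exp_pos| |exact Hw].
    intros z Hz. apply exp_opp_mul_le; [exact eps_ge0|].
    pose proof (proj2 (proj2 (proj2 metric)) p (g a) z). lra.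
Qed.

End Uniformized.

Theorem proposition3p6 :
  forall eps M : R, 0 < eps -> 0 < M ->
  exists C : R, 1 <= C /\
    forall (X : Type) (d : X -> X -> R) (p : X), geodesic_space d ->
    forall (x y : X) (gamma : R -> X),
      d x y <= M -> is_geodesic d gamma x y ->
      Rbar_le (curve_length (uniformized d p eps) gamma 0 (d x y))
              (Finite (C * uniformized d p eps x y)).
Proof.
  intros eps M Heps HM. exists (exp (2 * eps * M)). split.
  { rewrite <- exp_0. apply exp_le_exp. nra. }
  intros X d p [metric _] x y gam HxyM geo.
  pose proof (proj1 metric x y) as Hxy.
  pose proof (exp_pos (2 * eps * M)).
  assert (Hratio : exp (- eps * (d p x - d x y))
                   <= exp (2 * eps * M) * exp (- eps * (d p x + d x y))).
  { rewrite <- exp_plus. apply exp_le_exp. nra. }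
  pose proof (uniformized_ge d p eps metric ltac:(lra) gam x y geo) as Hlower.
  eapply Rbar_le_trans;
    [exact (curve_length_uniformized_geodesic_le d p eps metric ltac:(lra) gam x y geo)|].
  simpl. apply Rle_trans with (exp (2 * eps * M) * exp (- eps * (d p x + d x y)) * d x y).
  - apply Rmult_le_compat_r; assumption.
  - rewrite Rmult_assoc. apply Rmult_le_compat_l; lra.
Qed.
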